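(* Let $d\ge 2$ and let $\{(G_\nu,S_\nu,|\cdot|_\nu)\}_{\nu\in\mathbb{N}}$ be a non-$\ell_1$-expanding similar family of groups of automorphisms of $T_d$. Then for every $\nu\in\mathbb{N}$, $\kappa_\nu\le\kappa_{\nu+1}$.
   Context: $T_d$ is the $d$-regular rooted tree; $\mathrm{Sym}(d)$ acts by rooted automorphisms, and every $g\in\mathrm{Aut}(T_d)$ is uniquely $g=(g_1,\dots,g_d)\tau$ with $\tau\in\mathrm{Sym}(d)$ and $g_i$ the restriction of $g\tau^{-1}$ to the subtree at the $i$-th child of the root. A pseudolength on a finite symmetric generating set $S$ of $G$ is a map $S\to\{0,1\}$; the word pseudonorm is $|g|=\min\{\sum_i|s_i| : g=s_1\cdots s_k,\ s_i\in S\}$; it is proper if the subgroup generated by the length-$0$ generators is finite. A non-$\ell_1$-expanding similar family is a family $\{(G_\nu,S_\nu,|\cdot|_\nu)\}_{\nu\in\mathbb{N}}$ where each $G_\nu\le\mathrm{Aut}(T_d)$ acts transitively on each level, is generated by the finite symmetric set $S_\nu$ and carries a proper word pseudonorm $|\cdot|_\nu$, such that every $g\in G_\nu$ is $g=(g_1,\dots,g_d)\tau$ with $g_i\in G_{\nu+1}$, $\tau\in\mathrm{Sym}(d)$ and $\sum_{i=1}^d|g_i|_{\nu+1}\le|g|_\nu$. $\gamma_\nu(n)=|\{g\in G_\nu : |g|_\nu\le n\}|$ and $\kappa_\nu=\lim_{n\to\infty}\gamma_\nu(n)^{1/n}$ is the exponential growth rate (this limit exists). *)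

From Stdlib Require Import Reals ClassicalEpsilon.
From Stdlib Require List.
From Coquelicot Require Import Coquelicot.
From mathcomp Require Import all_boot.

Set Implicit Arguments.
Unset Strict Implicit.
Unset Printing Implicit Defensive.

(* Vertices of the d-regular rooted tree T_d: finite words over {0,..,d-1};
   the root is [::], the children of w are rcons w i. *)
Definition vertex (d : nat) := seq 'I_d.
Definition tmap (d : nat) := vertex d -> vertex d.

Definition is_aut (d : nat) (f : tmap d) : Prop :=
  bijective f /\ f [::] = [::] /\
  (forall (w : vertex d) (i : 'I_d), exists j : 'I_d, f (rcons w i) = rcons (f w) j).

(* Section of g at the first-level vertex i (restriction of g to the subtree
   at i, identified with T_d). *)
Definition section (d : nat) (g : tmap d) (i : 'I_d) : tmap d :=
  fun w => behead (g (i :: w)).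

Definition wprod (d : nat) (ws : seq (tmap d)) : tmap d :=
  foldr (fun (s acc : tmap d) => fun w => s (acc w)) (fun w => w) ws.

Definition generated (d : nat) (S : tmap d -> Prop) (g : tmap d) : Prop :=
  exists ws : seq (tmap d), (forall s, List.In s ws -> S s) /\ wprod ws = g.

Definition finite_set (T : Type) (P : T -> Prop) : Prop :=
  exists l : seq T, forall x, P x -> List.In x l.

Definition symmetric_set (d : nat) (S : tmap d -> Prop) : Prop :=
  forall s, S s -> exists t, S t /\ (fun w => t (s w)) = (fun w => w) /\ (fun w => s (t w)) = (fun w => w).

Definition wcost (d : nat) (L : tmap d -> bool) (ws : seq (tmap d)) : nat :=
  sumn (map (fun s => nat_of_bool (L s)) ws).

Definition wnorm (d : nat) (S : tmap d -> Prop) (L : tmap d -> bool) (g : tmap d) : nat :=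
  epsilon (inhabits O) (fun n : nat =>
    (exists ws, (forall s, List.In s ws -> S s) /\ wprod ws = g /\ wcost L ws = n) /\
    (forall ws, (forall s, List.In s ws -> S s) -> wprod ws = g -> leq n (wcost L ws))).

Definition proper_pseudonorm (d : nat) (S : tmap d -> Prop) (L : tmap d -> bool) : Prop :=
  finite_set (generated (fun s => S s /\ L s = false)).

Definition level_transitive (d : nat) (S : tmap d -> Prop) : Prop :=
  forall u v : vertex d, size u = size v -> exists g, generated S g /\ g u = v.

Definition fincard (T : Type) (P : T -> Prop) : nat :=
  epsilon (inhabits O) (fun m : nat =>
    exists l : seq T, List.NoDup l /\ (forall x, P x <-> List.In x l) /\ size l = m).

Definition gamma (d : nat) (S : tmap d -> Prop) (L : tmap d -> bool) (n : nat) : nat :=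
  fincard (fun g => generated S g /\ leq (wnorm S L g) n).

Definition kappa (d : nat) (S : tmap d -> Prop) (L : tmap d -> bool) : Rbar :=
  Lim_seq (fun n : nat => Rpower (INR (gamma S L n)) (/ INR n)).

Definition non_l1_expanding_similar_family (d : nat)
    (S : nat -> tmap d -> Prop) (L : nat -> tmap d -> bool) : Prop :=
  (forall nu,
     finite_set (S nu) /\ symmetric_set (S nu) /\ (forall s, S nu s -> is_aut s) /\
     proper_pseudonorm (S nu) (L nu) /\ level_transitive (S nu)) /\
  (forall nu g, generated (S nu) g ->
     (forall i : 'I_d, generated (S nu.+1) (section g i)) /\
     leq (\sum_(i < d) wnorm (S nu.+1) (L nu.+1) (section g i)) (wnorm (S nu) (L nu) g)).

(* An element g of G_nu of norm at most n is determined by its root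
   permutation (at most d^d choices) and its sections g_1, ..., g_d in
   G_(nu+1), whose norms m_i sum to at most n ((n+1)^d choices of the vector
   m).  Submultiplicativity of gamma_(nu+1) gives
   gamma_(nu+1)(m) <= gamma_(nu+1)(k)^(m/k + 1), hence
   gamma_nu(n) <= d^d (n+1)^d gamma_(nu+1)(k)^(n/k + d) for every k >= 1.
   Taking n-th roots, limsup_n gamma_nu(n)^(1/n) <= gamma_(nu+1)(k)^(1/k) for
   every k, so it is bounded by liminf_k gamma_(nu+1)(k)^(1/k). *)

From Stdlib Require Import Classical ClassicalEpsilon FunctionalExtensionality.
From Stdlib Require Import Reals Lra Psatz.
From Coquelicot Require Import Coquelicot.
From mathcomp Require Import all_boot zify.

Set Implicit Arguments.
Unset Strict Implicit.
Unset Printing Implicit Defensive.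

Open Scope nat_scope.

Definition covers (T : Type) (P : T -> Prop) (l : seq T) := forall x, P x -> List.In x l.

Lemma size_length (T : Type) (l : seq T) : size l = length l.
Proof. by elim: l => //= x l ->. Qed.

Lemma size_flat_map_le (A B : Type) (f : A -> seq B) (l : seq A) (n : nat) :
  (forall x, List.In x l -> size (f x) <= n) -> size (List.flat_map f l) <= size l * n.
Proof.
elim: l => //= x l IHl fn; rewrite size_cat mulSn leq_add //; first by apply: fn; left.
by apply: IHl => y ly; apply: fn; right.
Qed.

Lemma In_mem (T : eqType) (x : T) (s : seq T) : x \in s -> List.In x s.
Proof. by elim: s => //= y s IHs; rewrite in_cons => /orP [/eqP ->|/IHs]; auto. Qed.

Section Cardinality.
Variables (T : Type) (P : T -> Prop).

Lemma exact_list_of_cover l : covers P l ->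
  exists l', List.NoDup l' /\ forall x, P x <-> List.In x l'.
Proof.
move=> Pl; pose inP x := if excluded_middle_informative (P x) then true else false.
exists (List.nodup (fun x y => excluded_middle_informative (x = y)) (List.filter inP l)).
split=> [|x]; first exact: List.NoDup_nodup.
rewrite List.nodup_In List.filter_In /inP; case: excluded_middle_informative => Px.
- by split=> // _; split=> //; apply: Pl.
- by split=> // [[]].
Qed.

Lemma fincardP l : covers P l ->
  exists l', [/\ List.NoDup l', forall x, P x <-> List.In x l' & size l' = fincard P].
Proof.
move=> /exact_list_of_cover [l0 [nd0 P_l0]].
have /(epsilon_spec (inhabits O)) : exists m, exists l', List.NoDup l' /\
    (forall x, P x <-> List.In x l') /\ size l' = m by exists (size l0), l0.
by case=> l' [nd [P_l' sz]]; exists l'.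
Qed.

Lemma fincard_le_size l : covers P l -> fincard P <= size l.
Proof.
move=> Pl; have [l' [nd P_l' <-]] := fincardP Pl.
rewrite !size_length; apply/leP/List.NoDup_incl_length => // x /P_l'; exact: Pl.
Qed.

Lemma fincard_gt0 l x : covers P l -> P x -> 0 < fincard P.
Proof. by move=> /fincardP [[|? ?] [_ P_l' <-]] // /P_l'. Qed.

Lemma fincard_cover l : covers P l -> exists l', covers P l' /\ size l' = fincard P.
Proof. by move=> /fincardP [l' [_ P_l' sz]]; exists l'; split=> // x /P_l'. Qed.

End Cardinality.

Lemma fincard_mono (T : Type) (P Q : T -> Prop) l :
  (forall x, P x -> Q x) -> covers Q l -> fincard P <= fincard Q.
Proof.
move=> PQ /fincard_cover [l' [Q_l' <-]]; apply: fincard_le_size => x /PQ; exact: Q_l'.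
Qed.

Definition comp_list (T : Type) (l1 l2 : seq (T -> T)) : seq (T -> T) :=
  List.flat_map (fun a => List.map (fun b => fun x => a (b x)) l2) l1.

Lemma In_comp_list (T : Type) (l1 l2 : seq (T -> T)) a b :
  List.In a l1 -> List.In b l2 -> List.In (fun x => a (b x)) (comp_list l1 l2).
Proof. by move=> a1 b2; apply/List.in_flat_map; exists a; split; last exact: List.in_map. Qed.

Lemma size_comp_list (T : Type) (l1 l2 : seq (T -> T)) :
  size (comp_list l1 l2) <= size l1 * size l2.
Proof. by apply: size_flat_map_le => a _; rewrite size_length List.length_map -size_length. Qed.

Section WordNorm.
Variables (d : nat) (S : tmap d -> Prop) (L : tmap d -> bool).
Implicit Types (ws : seq (tmap d)) (g : tmap d).

Definition word_over ws := forall s, List.In s ws -> S s.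

Definition ball n g := generated S g /\ wnorm S L g <= n.

Lemma gammaE n : gamma S L n = fincard (ball n).
Proof. by []. Qed.

Lemma word_over_cat ws1 ws2 : word_over (ws1 ++ ws2) -> word_over ws1 /\ word_over ws2.
Proof. by move=> ws12S; split=> s s_ws; apply: ws12S; apply: List.in_or_app; auto. Qed.

Lemma wprod_cat ws1 ws2 : wprod (ws1 ++ ws2) = fun w => wprod ws1 (wprod ws2 w).
Proof. by elim: ws1 => //= s ws1 ->. Qed.

Lemma wcost_cat ws1 ws2 : wcost L (ws1 ++ ws2) = wcost L ws1 + wcost L ws2.
Proof. by rewrite /wcost map_cat sumn_cat. Qed.

Lemma wnorm_spec g : generated S g ->
  (exists ws, [/\ word_over ws, wprod ws = g & wcost L ws = wnorm S L g]) /\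
  (forall ws, word_over ws -> wprod ws = g -> wnorm S L g <= wcost L ws).
Proof.
move=> [ws0 [ws0S ws0g]].
pose cost_of m := exists ws, word_over ws /\ wprod ws = g /\ wcost L ws = m.
have [m [[cost_m m_min] _]] :=
  Wf_nat.dec_inh_nat_subset_has_unique_least_element cost_of (fun m => classic _)
    (ex_intro _ _ (ex_intro _ ws0 (conj ws0S (conj ws0g erefl)))).
have /(epsilon_spec (inhabits O)) : exists n, cost_of n /\
    forall ws, word_over ws -> wprod ws = g -> n <= wcost L ws.
  by exists m; split=> // ws wsS wsg; apply/leP/m_min; exists ws.
by case=> -[ws [wsS [wsg wscost]]] min; split=> //; exists ws.
Qed.

Lemma wnorm_le ws : word_over ws -> wnorm S L (wprod ws) <= wcost L ws.
Proof. by move=> wsS; apply: (wnorm_spec (ex_intro _ ws (conj wsS erefl))).2. Qed.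

Lemma generated_id : generated S (fun w => w).
Proof. by exists [::]. Qed.

Lemma wnorm_id : wnorm S L (fun w => w) = 0.
Proof. by apply/eqP; rewrite -leqn0; apply: (@wnorm_le [::]). Qed.

Lemma wcost_split ws t : t <= wcost L ws ->
  exists ws1 ws2, ws = ws1 ++ ws2 /\ wcost L ws1 = t.
Proof.
elim: ws t => [|s ws IHws] [|t] t_le //; first by exists [::], [::].
  by exists [::], (s :: ws).
move: t_le; rewrite /wcost /= -/(wcost L ws) => t_le.
have [|ws1 [ws2 [-> cost1]]] := IHws (t.+1 - L s); first by case: (L s) t_le; rewrite ?subn1.
exists (s :: ws1), ws2; split=> //; rewrite /wcost /= -/(wcost L ws1) cost1.
by case: (L s); rewrite /= ?subn1 ?subn0.
Qed.

Lemma ball_add_cover a b l1 l2 :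
  covers (ball a) l1 -> covers (ball b) l2 -> covers (ball (a + b)) (comp_list l1 l2).
Proof.
move=> cov1 cov2 g [gS g_norm].
have [[ws [wsS def_g ws_cost]] _] := wnorm_spec gS.
have [ws1 [ws2 [def_ws cost1]]] := wcost_split (geq_minr a (wcost L ws)).
have cost_ws := wcost_cat ws1 ws2; rewrite -def_ws in cost_ws.
move: wsS; rewrite def_ws => /word_over_cat [ws1S ws2S].
rewrite -def_g def_ws wprod_cat; apply: In_comp_list.
- apply: cov1; split; first by exists ws1.
  by apply: leq_trans (wnorm_le ws1S) _; rewrite cost1 geq_minl.
- apply: cov2; split; first by exists ws2.
  by apply: leq_trans (wnorm_le ws2S) _; lia.
Qed.

End WordNorm.

Section GrowthFunction.
Variables (d : nat) (S : tmap d -> Prop) (L : tmap d -> bool).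
Hypotheses (S_finite : finite_set S) (L_proper : proper_pseudonorm S L).

(* A word of cost c is h_0 s_1 h_1 ... s_c h_c with the h_i in the finite
   group generated by the length-0 generators. *)
Fixpoint cost_list (lH lS : seq (tmap d)) (c : nat) : seq (tmap d) :=
  if c is c'.+1 then comp_list lH (comp_list lS (cost_list lH lS c')) else lH.

Lemma In_cost_list lH lS :
  covers (generated (fun s => S s /\ L s = false)) lH -> covers S lS ->
  forall ws, word_over S ws -> forall h, generated (fun s => S s /\ L s = false) h ->
  List.In (fun w => h (wprod ws w)) (cost_list lH lS (wcost L ws)).
Proof.
move=> covH covS; elim=> [|s ws IHws] wsS h hH; first exact: covH.
have sS : S s by apply: wsS; left.
have {}IHws := IHws (fun t t_ws => wsS t (or_intror t_ws)).
rewrite /wcost /= -/(wcost L ws); case Ls: (L s) => /=.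
- apply: In_comp_list; first exact: covH.
  by apply: In_comp_list; [exact: covS | exact: (IHws _ (generated_id _))].
- apply: (IHws (fun w => h (s w))); case: hH => hs [hsH <-].
  exists (hs ++ [:: s]); rewrite wprod_cat; split=> // t /List.in_app_iff [/hsH //|[<-|[]]].
  by split.
Qed.

Lemma ball_cover n : exists l, covers (ball S L n) l.
Proof.
case: S_finite => lS covS; case: L_proper => lH covH.
exists (List.flat_map (cost_list lH lS) (iota 0 n.+1)) => g [gS g_norm].
have [[ws [wsS def_g ws_cost]] _] := wnorm_spec L gS; subst g.
apply/List.in_flat_map; exists (wcost L ws); split.
  by apply: In_mem; rewrite mem_iota add0n ltnS ws_cost g_norm.
exact: (In_cost_list covH covS wsS (generated_id _)).
Qed.

Lemma gamma_gt0 n : 0 < gamma S L n.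
Proof.
have [l covl] := ball_cover n; apply: (fincard_gt0 (x := fun w => w) covl).
by split; [exact: generated_id | rewrite wnorm_id].
Qed.

Lemma gamma_mono m n : m <= n -> gamma S L m <= gamma S L n.
Proof.
move=> le_mn; have [l covl] := ball_cover n; rewrite !gammaE.
by apply: fincard_mono covl => g [gS g_norm]; split=> //; apply: leq_trans le_mn.
Qed.

Lemma gamma_submul a b : gamma S L (a + b) <= gamma S L a * gamma S L b.
Proof.
rewrite !gammaE; have [[la cov_a] [lb cov_b]] := (ball_cover a, ball_cover b).
have [[l1 [cov1 <-]] [l2 [cov2 <-]]] := (fincard_cover cov_a, fincard_cover cov_b).
apply: leq_trans (size_comp_list l1 l2).
exact/fincard_le_size/ball_add_cover.
Qed.

Lemma gamma_le_pow k m : 0 < k -> gamma S L m <= gamma S L k ^ (m %/ k).+1.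
Proof.
move=> k_gt0; have gamma_pow j : gamma S L (j.+1 * k) <= gamma S L k ^ j.+1.
  elim: j => [|j IHj]; first by rewrite mul1n expn1.
  by rewrite mulSn expnS; apply: leq_trans (gamma_submul _ _) _; rewrite leq_mul2l IHj orbT.
exact/(leq_trans _ (gamma_pow _))/gamma_mono/ltnW/ltn_ceil.
Qed.

End GrowthFunction.

Lemma sum_divn_le (r : seq nat) k : 0 < k -> \sum_(m <- r) m %/ k <= (\sum_(m <- r) m) %/ k.
Proof.
move=> k_gt0; rewrite leq_divRL // big_distrl /=.
by apply: leq_sum => m _; exact: leq_divM.
Qed.

Fixpoint cart_prod (T : Type) (ls : seq (seq T)) : seq (seq T) :=
  if ls is l :: ls' then List.flat_map (fun x => List.map (cons x) (cart_prod ls')) l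
  else [:: [::]].

Lemma In_cart_prod_map (I T : Type) (js : seq I) (F : I -> T) (E : I -> seq T) :
  (forall j, List.In (F j) (E j)) -> List.In (map F js) (cart_prod (map E js)).
Proof.
move=> FE; elim: js => [|j js IHjs] /=; first by left.
by apply/List.in_flat_map; exists (F j); split; last exact: List.in_map.
Qed.

Lemma size_mem_cart_prod (T : Type) (xs : seq T) ls :
  List.In xs (cart_prod ls) -> size xs = size ls.
Proof.
elim: ls xs => [|l ls IHls] xs /=; first by case=> [<-|[]].
by case/List.in_flat_map=> x [_ /List.in_map_iff [ys [<- /IHls /= ->]]].
Qed.

Lemma size_cart_prod (T : Type) (ls : seq (seq T)) :
  size (cart_prod ls) <= \prod_(l <- ls) size l.
Proof.
elim: ls => [|l ls IHls] /=; first by rewrite big_nil.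
rewrite big_cons; apply: leq_trans (size_flat_map_le (n := size (cart_prod ls)) _) _.
  by move=> x _; rewrite size_length List.length_map -size_length.
by rewrite leq_mul2l IHls orbT.
Qed.

Section Sections.
Variable d : nat.
Implicit Types (f g : tmap d) (ws : seq (tmap d)).

Definition tree_morphism f :=
  f [::] = [::] /\ forall w i, exists j, f (rcons w i) = rcons (f w) j.

Lemma aut_tree_morphism f : is_aut f -> tree_morphism f.
Proof. by case=> _ []. Qed.

Lemma wprod_tree_morphism ws :
  (forall s, List.In s ws -> tree_morphism s) -> tree_morphism (wprod ws).
Proof.
elim: ws => [|s ws IHws] ws_morph /=; first by split=> // w i; exists i.
have [s_root s_child] := ws_morph s (or_introl erefl).
have [p_root p_child] := IHws (fun t t_ws => ws_morph t (or_intror t_ws)).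
split=> [|w i]; first by rewrite p_root s_root.
by have [j ->] := p_child w i; apply: s_child.
Qed.

Lemma tree_morphism_cat f u v : tree_morphism f -> exists s, f (u ++ v) = f u ++ s.
Proof.
case=> _ f_child; elim/last_ind: v => [|v i [s Es]]; first by exists [::]; rewrite !cats0.
have [j Ej] := f_child (u ++ v) i.
by exists (rcons s j); rewrite -rcons_cat Ej Es rcons_cat.
Qed.

Lemma tree_morphism_cons f i w :
  tree_morphism f -> f (i :: w) = head i (f [:: i]) :: section f i w.
Proof.
move=> f_morph; have [s Es] := tree_morphism_cat [:: i] w f_morph.
have [j Ej] := f_morph.2 [::] i; rewrite /= f_morph.1 in Ej.
by rewrite /section Es Ej.
Qed.

Definition root_action f : seq 'I_d := [seq head i (f [:: i]) | i <- enum 'I_d].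

Definition sections f : seq (tmap d) := [seq section f i | i <- enum 'I_d].

(* [rebuild tau hs] is the paper's [(h_1, ..., h_d) tau]. *)
Definition rebuild (tau : seq 'I_d) (hs : seq (tmap d)) : tmap d :=
  fun w => if w is i :: w' then nth i tau i :: nth (fun x => x) hs i w' else [::].

Lemma rebuild_root_sections f : tree_morphism f -> rebuild (root_action f) (sections f) = f.
Proof.
move=> f_morph; apply: functional_extensionality => -[|i w] /=; first by rewrite f_morph.1.
have i_lt : i < size (enum 'I_d) by rewrite size_enum_ord ltn_ord.
by rewrite (tree_morphism_cons _ _ f_morph) !(nth_map i _ _ i_lt) nth_ord_enum.
Qed.

Definition dtuples (T : Type) (l : seq T) : seq (seq T) := cart_prod [seq l | _ <- enum 'I_d].

Lemma In_dtuples (T : Type) (l : seq T) (F : 'I_d -> T) :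
  (forall i, List.In (F i) l) -> List.In (map F (enum 'I_d)) (dtuples l).
Proof. exact: In_cart_prod_map. Qed.

Lemma size_mem_dtuples (T : Type) (l : seq T) xs : List.In xs (dtuples l) -> size xs = d.
Proof. by move/size_mem_cart_prod; rewrite size_map size_enum_ord. Qed.

Lemma size_dtuples (T : Type) (l : seq T) : size (dtuples l) <= size l ^ d.
Proof.
apply: leq_trans (size_cart_prod _) _.
by rewrite big_map big_enum prod_nat_const card_ord.
Qed.

Definition section_list (E : nat -> seq (tmap d)) (n : nat) : seq (tmap d) :=
  List.flat_map (fun tau => List.flat_map (fun mv =>
      if sumn mv <= n then List.map (rebuild tau) (cart_prod (map E mv)) else [::])
    (dtuples (iota 0 n.+1))) (dtuples (enum 'I_d)).

Lemma section_list_cover (S S' : tmap d -> Prop) (L L' : tmap d -> bool) E n :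
  (forall s, S s -> is_aut s) ->
  (forall g, generated S g -> (forall i, generated S' (section g i)) /\
     \sum_(i < d) wnorm S' L' (section g i) <= wnorm S L g) ->
  (forall m, covers (ball S' L' m) (E m)) ->
  covers (ball S L n) (section_list E n).
Proof.
move=> S_aut S_sections covE g [gS g_norm].
have g_morph : tree_morphism g.
  case: (gS) => ws [wsS <-]; apply: wprod_tree_morphism => s s_ws.
  exact/aut_tree_morphism/S_aut/wsS.
have [sec_gen sec_norm] := S_sections g gS.
pose norms := [seq wnorm S' L' (section g i) | i <- enum 'I_d].
have norms_sum : sumn norms <= n.
  by rewrite sumnE big_map big_enum; apply: leq_trans sec_norm g_norm.
apply/List.in_flat_map; exists (root_action g); split.
  by apply: In_dtuples => i; apply/In_mem/mem_enum.
apply/List.in_flat_map; exists norms; split.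
  apply: In_dtuples => i; apply: In_mem; rewrite mem_iota add0n ltnS.
  by apply: leq_trans norms_sum; rewrite sumnE big_map (bigD1_seq i) ?mem_enum ?enum_uniq ?leq_addr.
rewrite norms_sum; apply/List.in_map_iff; exists (sections g).
split; first exact: rebuild_root_sections.
by rewrite -map_comp; apply: In_cart_prod_map => i; apply: covE; split.
Qed.

Lemma size_section_list (E : nat -> seq (tmap d)) n k C : 0 < k -> 0 < C ->
  (forall m, size (E m) <= C ^ (m %/ k).+1) ->
  size (section_list E n) <= d ^ d * n.+1 ^ d * C ^ (n %/ k + d).
Proof.
move=> k_gt0 C_gt0 sizeE.
have size_sections mv : size mv = d -> sumn mv <= n ->
    size (cart_prod (map E mv)) <= C ^ (n %/ k + d).
  move=> size_mv mv_sum; apply: leq_trans (size_cart_prod _) _.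
  rewrite big_map; apply: leq_trans (leq_prod (fun m _ => sizeE m)) _.
  rewrite -expn_sum leq_pexp2l //.
  under eq_bigr do rewrite -addn1.
  rewrite big_split /= sum1_size size_mv leq_add2r.
  by apply: leq_trans (sum_divn_le _ k_gt0) _; rewrite leq_div2r // -sumnE.
rewrite -mulnA; apply: leq_trans (size_flat_map_le (n := n.+1 ^ d * C ^ (n %/ k + d)) _) _.
  move=> tau _; apply: leq_trans (size_flat_map_le (n := C ^ (n %/ k + d)) _) _.
    move=> mv /size_mem_dtuples size_mv; case: ifP => // mv_sum.
    by rewrite size_length List.length_map -size_length; apply: size_sections.
  by rewrite leq_mul2r (leq_trans (size_dtuples _)) ?size_iota ?orbT.
by rewrite leq_mul2r (leq_trans (size_dtuples _)) ?size_enum_ord ?orbT.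
Qed.

End Sections.

Lemma gamma_le_sections d (S S' : tmap d -> Prop) (L L' : tmap d -> bool) k n :
  finite_set S' -> proper_pseudonorm S' L' -> 0 < k ->
  (forall s, S s -> is_aut s) ->
  (forall g, generated S g -> (forall i, generated S' (section g i)) /\
     \sum_(i < d) wnorm S' L' (section g i) <= wnorm S L g) ->
  gamma S L n <= d ^ d * n.+1 ^ d * gamma S' L' k ^ (n %/ k + d).
Proof.
move=> S'_finite L'_proper k_gt0 S_aut S_sections.
have E_ex m : exists l, covers (ball S' L' m) l /\ size l = gamma S' L' m.
  by have [l /fincard_cover] := ball_cover S'_finite L'_proper m.
have [E E_spec] := choice _ E_ex.
have cov_n := section_list_cover (n := n) S_aut S_sections (fun m => (E_spec m).1).
rewrite gammaE; apply: leq_trans (fincard_le_size cov_n) _.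
apply: size_section_list => // [|m]; first exact: gamma_gt0.
by rewrite (E_spec m).2; apply: gamma_le_pow.
Qed.

Section RootLimits.
Local Open Scope R_scope.

Lemma exp_le_mono x y : x <= y -> exp x <= exp y.
Proof. by case/Rle_lt_or_eq_dec=> [/exp_increasing|->]; lra. Qed.

Lemma INR_muln (m p : nat) : INR (m * p)%N = INR m * INR p.
Proof. by rewrite mulnE mult_INR. Qed.

Lemma INR_addn (m p : nat) : INR (m + p)%N = INR m + INR p.
Proof. by rewrite addnE plus_INR. Qed.

Lemma INR_expn (m p : nat) : INR (m ^ p)%N = INR m ^ p.
Proof. by elim: p => [|p IHp]; rewrite ?expn0 // expnS INR_muln IHp. Qed.

Lemma INR_gt0 (n : nat) : (0 < n)%N -> 0 < INR n.
Proof. by move=> /ltP; apply: lt_0_INR. Qed.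

Lemma ln_INR_ge0 (n : nat) : (0 < n)%N -> 0 <= ln (INR n).
Proof. by move=> /ltP n_gt0; rewrite -ln_1; apply: ln_le; [lra | apply: (le_INR 1)]. Qed.

Lemma Lim_seq_le_LimSup (u : nat -> R) : Rbar_le (Lim_seq u) (LimSup_seq u).
Proof.
rewrite /Lim_seq; have := LimSup_LimInf_seq_le u.
by case: (LimSup_seq u) => [s| |]; case: (LimInf_seq u) => [i| |] //= ?; lra.
Qed.

Lemma LimInf_le_Lim_seq (u : nat -> R) : Rbar_le (LimInf_seq u) (Lim_seq u).
Proof.
rewrite /Lim_seq; have := LimSup_LimInf_seq_le u.
by case: (LimSup_seq u) => [s| |]; case: (LimInf_seq u) => [i| |] //= ?; lra.
Qed.

Lemma Lim_seq_le_of_LimSup_le (a b : nat -> R) :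
  (forall k, (0 < k)%N -> Rbar_le (LimSup_seq a) (b k)) -> Rbar_le (Lim_seq a) (Lim_seq b).
Proof.
move=> a_le_b; apply: Rbar_le_trans (Lim_seq_le_LimSup a) _.
apply: Rbar_le_trans _ (LimInf_le_Lim_seq b).
have := a_le_b 1%N isT; case E: (LimSup_seq a) => [r|//|//] _.
rewrite -(LimInf_seq_const r); apply: LimInf_le.
by exists 1%N => k /leP k_gt0; move: (a_le_b k k_gt0); rewrite E.
Qed.

Lemma is_lim_seq_exp_vanishing (A B c : R) :
  is_lim_seq (fun n => exp (A * / INR n + B * (ln (INR n.+1) / INR n.+1) + c)) (exp c).
Proof.
suff : is_lim_seq (fun n => A * / INR n + B * (ln (INR n.+1) / INR n.+1) + c)
    (A * 0 + B * 0 + c).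
  rewrite !Rmult_0_r !Rplus_0_l; apply: (is_lim_seq_continuous exp).
  exact/derivable_continuous_pt/derivable_pt_exp.
apply: is_lim_seq_plus'; last exact: is_lim_seq_const.
apply: is_lim_seq_plus'; apply: is_lim_seq_mult'; try exact: is_lim_seq_const.
- by apply: (is_lim_seq_inv _ p_infty); [exact: is_lim_seq_INR | by []].
- apply: (is_lim_comp_seq (fun y => ln y / y) (fun n => INR n.+1) p_infty 0).
  + exact: is_lim_div_ln_p.
  + by exists O.
  + exact/(is_lim_seq_incr_1 INR)/is_lim_seq_INR.
Qed.

Lemma ln_INR_le_of_growth (G K H D n k : nat) :
  (0 < G)%N -> (0 < K)%N -> (0 < H)%N -> (G <= K * n.+1 ^ D * H ^ (n %/ k + D))%N ->
  ln (INR G) <= ln (INR K) + INR D * ln (INR n.+1) + (INR (n %/ k) + INR D) * ln (INR H).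
Proof.
move=> G_gt0 K_gt0 H_gt0 G_le.
have [Kp np Hp] : [/\ 0 < INR K, 0 < INR n.+1 & 0 < INR H] by split; apply: INR_gt0.
apply: Rle_trans (ln_le _ _ (INR_gt0 G_gt0) (le_INR _ _ (leP G_le))) _.
rewrite !INR_muln !INR_expn !ln_mult ?ln_pow ?INR_addn //;
  try apply: Rmult_lt_0_compat; try apply: pow_lt => //; lra.
Qed.

(* The middle term is written with [ln (n+1) / (n+1)] so that its limit is
   [is_lim_div_ln_p]; the factor 2 pays for [1 / n <= 2 / (n + 1)]. *)
Lemma ln_growth_bound (G K H D n k : nat) :
  (0 < G)%N -> (0 < K)%N -> (0 < H)%N -> (0 < n)%N -> (0 < k)%N ->
  (G <= K * n.+1 ^ D * H ^ (n %/ k + D))%N ->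
  / INR n * ln (INR G) <= (ln (INR K) + INR D * ln (INR H)) * / INR n
    + 2 * INR D * (ln (INR n.+1) / INR n.+1) + / INR k * ln (INR H).
Proof.
move=> G_gt0 K_gt0 H_gt0 n_gt0 k_gt0 G_le.
have ln_G := ln_INR_le_of_growth G_gt0 K_gt0 H_gt0 G_le.
have n_ge1 : 1 <= INR n by apply: (le_INR 1); apply/leP.
have k_ge1 : 1 <= INR k by apply: (le_INR 1); apply/leP.
have quot_le : INR (n %/ k) * INR k <= INR n by rewrite -mult_INR; apply/le_INR/leP/leq_divM.
have lnH_ge0 := ln_INR_ge0 H_gt0.
have lnn_ge0 := ln_INR_ge0 (ltn0Sn n).
rewrite S_INR in ln_G lnn_ge0 *.
set x := INR n in n_ge1 quot_le ln_G lnn_ge0 *; set q := INR (n %/ k) in quot_le ln_G.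
have inv_x : / x <= 2 * / (x + 1).
  have -> : 2 * / (x + 1) = / ((x + 1) / 2) by field; lra.
  by apply: Rinv_le_contravar; lra.
have quot_div : q * / x <= / INR k.
  apply: (Rmult_le_reg_r (x * INR k)); first nra.
  have -> : q * / x * (x * INR k) = q * INR k by field; lra.
  by have -> : / INR k * (x * INR k) = x by field; lra.
have invx_ge0 : 0 <= / x by apply/Rlt_le/Rinv_0_lt_compat; lra.
have mid_term := Rmult_le_compat_l (INR D * ln (x + 1)) _ _
  (Rmult_le_pos _ _ (pos_INR D) lnn_ge0) inv_x.
have quot_term := Rmult_le_compat_r (ln (INR H)) _ _ lnH_ge0 quot_div.
have scaled_ln_G := Rmult_le_compat_l (/ x) _ _ invx_ge0 ln_G.
rewrite /Rdiv; lra.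
Qed.

Lemma Lim_root_le (G H : nat -> nat) (K D : nat) :
  (0 < K)%N -> (forall n, 0 < G n)%N -> (forall n, 0 < H n)%N ->
  (forall k n, 0 < k -> G n <= K * n.+1 ^ D * H k ^ (n %/ k + D))%N ->
  Rbar_le (Lim_seq (fun n => Rpower (INR (G n)) (/ INR n)))
          (Lim_seq (fun n => Rpower (INR (H n)) (/ INR n))).
Proof.
move=> K_gt0 G_gt0 H_gt0 G_le; apply: Lim_seq_le_of_LimSup_le => k k_gt0.
have lim_k := @is_lim_seq_exp_vanishing (ln (INR K) + INR D * ln (INR (H k))) (2 * INR D)
  (/ INR k * ln (INR (H k))).
rewrite /Rpower -(is_LimSup_seq_unique _ _ (is_lim_LimSup_seq _ _ lim_k)).
apply: LimSup_le; exists 1%N => n /leP n_gt0; apply: exp_le_mono.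
exact: ln_growth_bound (G_gt0 n) K_gt0 (H_gt0 k) n_gt0 k_gt0 (G_le k n k_gt0).
Qed.

End RootLimits.

Theorem mainTheorem5 (d : nat) (S : nat -> tmap d -> Prop) (L : nat -> tmap d -> bool) :
  leq 2 d ->
  non_l1_expanding_similar_family S L ->
  forall nu : nat, Rbar_le (kappa (S nu) (L nu)) (kappa (S nu.+1) (L nu.+1)).
Proof.
move=> d_ge2 [S_props S_sections] nu.
have [S_finite [_ [S_aut [L_proper _]]]] := S_props nu.
have [S'_finite [_ [_ [L'_proper _]]]] := S_props nu.+1.
apply: (@Lim_root_le _ _ (d ^ d) d); first by rewrite expn_gt0 (ltnW d_ge2).
- by move=> n; apply: gamma_gt0 S_finite L_proper n.
- by move=> n; apply: gamma_gt0 S'_finite L'_proper n.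
- by move=> k n k_gt0; apply: gamma_le_sections S'_finite L'_proper k_gt0 S_aut (S_sections nu).
Qed.
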